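(* For every integer $n\ge2$, $\hat E_{2,n}(q)=\sum_{i=0}^{n-2}\binom{n}{i+2}q^i$.
   Context: Place $1,\dots,n$ clockwise on a circle. Distinct $p_1,\dots,p_m$ are in clockwise cyclic order if $(p_2-p_1)\bmod n<\dots<(p_m-p_1)\bmod n$ (residues in $\{0,\dots,n-1\}$). For $\pi\in S_n$ (fixed points regarded as ''counterclockwise loops''), an ordered pair $(i,j)$, $i\ne j$, is aligned if $\pi(j)\ne j$, the entries of $(i,\pi(i),\pi(j),j)$ are pairwise distinct except that possibly $i=\pi(i)$, and the distinct entries in this order are in clockwise cyclic order. An alignment is an unordered pair $\{i,j\}$ with $(i,j)$ or $(j,i)$ aligned; $\mathrm{al}(\pi)$ is their number. A weak excedence of $\pi$ is an $i$ with $\pi(i)\ge i$. $E_{k,n}(q)=\sum q^{k(n-k)-\mathrm{al}(\pi)}$ over $\pi\in S_n$ with exactly $k$ weak excedences, and $\hat E_{k,n}(q)=q^{k-n}E_{k,n}(q)$. *)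

From mathcomp Require Import all_boot all_order all_algebra all_fingroup.
Set Implicit Arguments. Unset Strict Implicit. Unset Printing Implicit Defensive.
Import GRing.Theory.

(* Points 1..n on the circle are represented by 0..n-1 (i : 'I_n stands for i+1);
   this shift does not change differences modulo n, nor the order i <= pi i. *)

Definition cres (n : nat) (p1 p : nat) : nat := (p + n - p1) %% n.

(* p_1, ..., p_m (assumed distinct) are in clockwise cyclic order:
   (p_2 - p_1) mod n < ... < (p_m - p_1) mod n *)
Definition clockwise (n : nat) (s : seq nat) : bool :=
  match s with
  | [::] => true
  | p1 :: t => sorted ltn (map (cres n p1) t)
  end.

Definition aligned (n : nat) (pi : 'S_n) (i j : 'I_n) : bool :=
  [&& i != j, pi j != j,
      [&& i != pi j, pi i != pi j, pi i != j & pi j != j] &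
      clockwise n (if i == pi i then [:: val i; val (pi j); val j]
                   else [:: val i; val (pi i); val (pi j); val j])].

Definition al (n : nat) (pi : 'S_n) : nat :=
  #|[set ij : 'I_n * 'I_n | (val ij.1 < val ij.2)%N &&
                            (aligned pi ij.1 ij.2 || aligned pi ij.2 ij.1)]|.

Definition wex (n : nat) (pi : 'S_n) : nat := #|[set i : 'I_n | (val i <= val (pi i))%N]|.

Local Open Scope ring_scope.

(* E_{k,n}(q), evaluated at a nonzero q in a field (Laurent exponents as ints) *)
Definition Ekn (R : unitRingType) (k n : nat) (q : R) : R :=
  \sum_(pi : 'S_n | wex pi == k) q ^ ((k * (n - k))%N%:Z - (al pi)%:Z).

Definition hatEkn (R : unitRingType) (k n : nat) (q : R) : R :=
  q ^ (k%:Z - n%:Z) * Ekn k n q.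

(* Shifting values cyclically, pi |-> sigma = ordS \o pi, turns the weak
   excedences of pi into the excedences of sigma plus the one point mapped
   to 0.  A permutation sigma with a single excedence is determined by its
   support S, which has at least two points: it maps every point of S to its
   predecessor in the cyclic order of S.  For the permutation pi attached to
   S, the pair (i, j) is aligned exactly when j is not in S and i is the first
   point of S clockwise after j, so al pi = n - #|S| and the term of
   hatE_{2,n} indexed by pi is q ^ (#|S| - 2).  Grouping the subsets S by
   size gives the binomial coefficients. *)

From mathcomp Require Import all_boot all_order all_algebra all_fingroup.
From mathcomp Require Import zify.
Set Implicit Arguments. Unset Strict Implicit. Unset Printing Implicit Defensive.

Section CyclicDistance.

Variable n : nat.
Implicit Types x y z : 'I_n.

Lemma cres_cases x y : x < n /\ y < n /\
  ((x <= y /\ cres n x y + x = y) \/ (y < x /\ cres n x y + x = y + n)).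
Proof.
have xn := ltn_ord x; have yn := ltn_ord y; rewrite /cres.
do 2 split => //; case: (leqP x y) => xy; [left | right]; split => //.
  have -> : y + n - x = y - x + n by lia.
  by rewrite modnDr modn_small; lia.
by rewrite modn_small; lia.
Qed.

Lemma cres_lt x y : cres n x y < n.
Proof. by have := cres_cases x y; lia. Qed.

Lemma cres_eq0 x y : (cres n x y == 0) = (x == y).
Proof. by have := cres_cases x y; rewrite -val_eqE /=; lia. Qed.

Lemma cresxx x : cres n x x = 0.
Proof. by apply/eqP; rewrite cres_eq0. Qed.

Lemma cres_inj x : injective (fun y : 'I_n => cres n x y).
Proof.
move=> y z yz; apply: ord_inj.
by have := cres_cases x y; have := cres_cases x z; lia.
Qed.

Lemma eq_cres x y z : (cres n x y == cres n x z) = (y == z).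
Proof. exact: (inj_eq (@cres_inj x)). Qed.

(* y lies on the clockwise arc from x to z iff, seen from z, x comes before y. *)
Lemma cres_arc x y z : y != x -> z != x ->
  (cres n x y < cres n x z) = (cres n z x < cres n z y).
Proof.
rewrite -!val_eqE /=; have := cres_cases x y; have := cres_cases x z.
by have := cres_cases z x; have := cres_cases z y; lia.
Qed.

Lemma cres_ord_pred x y :
  cres n x (ord_pred y) = if y == x then n.-1 else (cres n x y).-1.
Proof.
have pred_cases : (y = 0 :> nat /\ ord_pred y + 1 = n) \/ (0 < y /\ ord_pred y + 1 = y).
  have yn := ltn_ord y; rewrite /=; case: (posnP y) => y0; [left | right].
    by rewrite y0 add0n modn_small; lia.
  have -> : (y + n).-1 = y.-1 + n by lia.
  by rewrite modnDr modn_small; lia.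
have -> : (y == x) = (y == x :> nat) by [].
by have := cres_cases x y; have := cres_cases x (ord_pred y); case: eqP; lia.
Qed.

End CyclicDistance.

Definition exc n (f : 'I_n -> 'I_n) : nat := #|[set x : 'I_n | x < f x]|.

Lemma eq_exc n (f g : 'I_n -> 'I_n) : f =1 g -> exc f = exc g.
Proof. by move=> fg; apply: eq_card => x; rewrite !inE fg. Qed.

Lemma wex_exc n (pi : 'S_n) : 0 < n -> wex pi = (exc (fun x => ordS (pi x))).+1.
Proof.
case: n pi => // n pi _; set top := (pi^-1)%g ord_max.
have top_exc : top \notin [set x : 'I_n.+1 | x < ordS (pi x)].
  by rewrite inE /top permKV /= modnn.
transitivity #|top |: [set x : 'I_n.+1 | x < ordS (pi x)]|; last first.
  by rewrite cardsU1 top_exc.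
apply: eq_card => i; rewrite !inE -(inj_eq (@perm_inj _ pi)) permKV /=.
case: (eqVneq (pi i) ord_max) => [-> | top_i] /=; first by rewrite leq_ord.
have pi_lt : pi i < n.
  by rewrite ltn_neqAle -ltnS ltn_ord andbT; apply: contra_neq top_i => ?; apply: val_inj.
by rewrite modn_small.
Qed.

Section CyclicPredecessor.

Variables (n : nat) (S : {set 'I_n}).
Implicit Types x y : 'I_n.

(* For x in S, the point of S farthest clockwise from x, i.e. the predecessor
   of x in the cyclic order of S. *)
Definition cpred x : 'I_n :=
  if x \in S then [arg max_(y > x in S) cres n x y] else x.

Lemma cpred_out x : x \notin S -> cpred x = x.
Proof. by rewrite /cpred => /negbTE ->. Qed.

Lemma cpredP x : x \in S ->
  cpred x \in S /\ forall y, y \in S -> cres n x y <= cres n x (cpred x).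
Proof. by move=> xS; rewrite /cpred xS; case: arg_maxnP. Qed.

Lemma cpred_in x : (cpred x \in S) = (x \in S).
Proof. by case xS: (x \in S); [case: (cpredP xS) | rewrite cpred_out ?xS]. Qed.

Lemma cpred_unique x r : x \in S -> r \in S ->
  (forall y, y \in S -> cres n x y <= cres n x r) -> cpred x = r.
Proof.
move=> xS rS r_max; have [cS c_max] := cpredP xS.
by apply: (@cres_inj _ x); apply/eqP; rewrite eqn_leq c_max // r_max.
Qed.

Lemma cpred_inj : injective cpred.
Proof.
move=> x1 x2 E; have S12 : (x1 \in S) = (x2 \in S) by rewrite -cpred_in E cpred_in.
case x1S: (x1 \in S); last first.
  by rewrite -(cpred_out (negbT x1S)) E cpred_out // -S12 x1S.
have x2S : x2 \in S by rewrite -S12.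
have [_ max1] := cpredP x1S; have [_ max2] := cpredP x2S.
have := max2 x1 x1S; have := max1 x2 x2S; rewrite E => h1 h2; apply: ord_inj.
have := cres_cases x1 x2; have := cres_cases x2 x1.
by have := cres_cases x1 (cpred x2); have := cres_cases x2 (cpred x2); lia.
Qed.

Hypothesis S_gt1 : 1 < #|S|.

Lemma cpred_neq x : x \in S -> cpred x != x.
Proof.
move=> xS; have [y /setD1P [yx yS]] : exists y, y \in S :\ x.
  by apply/card_gt0P; move: S_gt1; rewrite (cardsD1 x S) xS.
have [_ c_max] := cpredP xS; apply/eqP => cx; have := c_max y yS.
by rewrite cx cresxx leqn0 cres_eq0 eq_sym (negbTE yx).
Qed.

Lemma exc_cpred : exc cpred = 1.
Proof.
have [s0 s0S] : exists s0, s0 \in S by apply/card_gt0P; lia.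
have [m mS m_min] := arg_minnP (fun y : 'I_n => nat_of_ord y) s0S.
apply/eqP/cards1P; exists m; apply/setP => x; rewrite !inE.
case xS: (x \in S); last first.
  by rewrite cpred_out ?xS // ltnn; apply/esym; apply: contraFF xS => /eqP ->.
have [cS c_max] := cpredP xS; have := cpred_neq xS; rewrite -val_eqE /=.
have := m_min _ cS; have := m_min _ xS; have := c_max _ mS.
have := cres_cases x m; have := cres_cases x (cpred x).
by have -> : (x == m) = (x == m :> nat) by []; lia.
Qed.

End CyclicPredecessor.

Lemma inj_eq_but_one (T : finType) (f g : T -> T) (a : T) :
  injective f -> injective g -> (forall x, x != a -> f x = g x) -> f =1 g.
Proof.
move=> f_inj /injF_bij [g' gK Kg] fg x.
case: (eqVneq x a) => [-> | ]; last exact: fg.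
case: (eqVneq (g' (f a)) a) => [E | ne]; first by rewrite -[in RHS]E Kg.
by move: (fg _ ne); rewrite Kg => /f_inj E; rewrite E eqxx in ne.
Qed.

Section OneExcedance.

Variables (n : nat) (rho : 'I_n -> 'I_n).
Hypotheses (rho_inj : injective rho) (exc_rho : exc rho = 1).

Let S := [set x | rho x != x].

Lemma exc1_gap x y : rho x <= x -> rho y != y -> ~~ (rho x < y < x).
Proof.
move=> dx Sy; apply/negP => /andP [lt_y lt_x].
pose T := [set z : 'I_n | z <= y]; pose E := [set z : 'I_n | z < rho z].
(* Pigeonhole: rho would map x and the non-excedances of T into T minus y. *)
have sub : rho @: (x |: (T :\: E)) \subset T :\ y.
  apply/subsetP => _ /imsetP [z /setU1P [-> | /setDP [zT zE]] ->]; rewrite !inE.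
    by rewrite ltnW // andbT; apply: contraTneq lt_y => ->; rewrite ltnn.
  rewrite !inE -leqNgt in zT zE.
  rewrite (leq_trans zE zT) andbT; apply/eqP => rzy.
  have zy : z = y by apply: ord_inj; move: zE zT; rewrite rzy; lia.
  by rewrite -{1}zy rzy eqxx in Sy.
have := subset_leq_card sub; rewrite card_imset // cardsU1 cardsD.
have -> : x \notin T :\: E by rewrite !inE (leqNgt x y) lt_x andbF.
have : #|T :&: E| <= 1 by rewrite -exc_rho subset_leq_card ?subsetIr.
by have := cardsD1 y T; rewrite !inE leqnn; lia.
Qed.

Lemma exc1_cpred x : rho x <= x -> rho x = cpred S x.
Proof.
move=> dx; case xS: (x \in S); last first.
  by rewrite cpred_out ?xS //; apply/eqP; move: xS; rewrite inE => /negbFE.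
have rxS : rho x \in S by move: xS; rewrite !inE (inj_eq rho_inj).
symmetry; apply: cpred_unique => // y; rewrite inE => /(exc1_gap dx) gap.
have : rho x <> x :> nat by move: xS; rewrite inE => /eqP ne /ord_inj.
by move: gap; have := cres_cases x y; have := cres_cases x (rho x); lia.
Qed.

Lemma exc1_support_gt1 : 1 < #|S|.
Proof.
have [e Ee] : exists e, [set x : 'I_n | x < rho x] = [set e] by apply/cards1P/eqP.
have : e \in [set e] := set11 e; rewrite -Ee inE => lt_e.
have ne : rho e != e by apply: contraTneq lt_e => ->; rewrite ltnn.
have sub : [set e; rho e] \subset S.
  by apply/subsetP => z /set2P [] ->; rewrite inE ?(inj_eq rho_inj).
by apply: leq_trans (subset_leq_card sub); rewrite cards2 eq_sym ne.
Qed.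

(* At the excedance itself, both injections must take the only value left. *)
Lemma exc1_eq_cpred : rho =1 cpred S.
Proof.
have [e Ee] : exists e, [set x : 'I_n | x < rho x] = [set e] by apply/cards1P/eqP.
apply: (inj_eq_but_one rho_inj (@cpred_inj _ S) (a := e)) => x xe.
apply: exc1_cpred; rewrite leqNgt; apply: contra xe => lt_x.
by rewrite -in_set1 -Ee inE.
Qed.

End OneExcedance.

Definition perm_of_set n (S : {set 'I_n}) : 'S_n :=
  perm (inj_comp (@ord_pred_inj n) (@cpred_inj n S)).

Lemma perm_of_setE n (S : {set 'I_n}) x : perm_of_set S x = ord_pred (cpred S x).
Proof. by rewrite permE. Qed.

Lemma ordS_perm_of_set n (S : {set 'I_n}) x : ordS (perm_of_set S x) = cpred S x.
Proof. by rewrite perm_of_setE ord_predK. Qed.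

Lemma support_perm_of_set n (S : {set 'I_n}) :
  1 < #|S| -> [set x | ordS (perm_of_set S x) != x] = S.
Proof.
move=> S_gt1; apply/setP => x; rewrite inE ordS_perm_of_set.
by case xS: (x \in S); [exact: cpred_neq | rewrite cpred_out ?xS ?eqxx].
Qed.

Lemma perm_of_set_inj n :
  {in [set S : {set 'I_n} | 1 < #|S|] &, injective (@perm_of_set n)}.
Proof.
move=> S1 S2; rewrite !inE => S1_gt1 S2_gt1 E.
by rewrite -(support_perm_of_set S1_gt1) E support_perm_of_set.
Qed.

Lemma wex_perm_of_set n (S : {set 'I_n}) : 1 < #|S| -> wex (perm_of_set S) = 2.
Proof.
move=> S_gt1; have [x _] : exists x, x \in S by apply/card_gt0P; lia.
rewrite wex_exc; last exact: leq_ltn_trans (ltn_ord x).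
by rewrite (@eq_exc _ _ (cpred S)) ?exc_cpred // => y; rewrite ordS_perm_of_set.
Qed.

Lemma wex2_perm_of_set n (pi : 'S_n) (S := [set x | ordS (pi x) != x]) :
  wex pi = 2 -> 1 < #|S| /\ pi = perm_of_set S.
Proof.
move=> wex2; have n_gt0 : 0 < n.
  have := max_card [set i : 'I_n | val i <= val (pi i)].
  by rewrite card_ord -/(wex pi) wex2; lia.
have rho_inj : injective (fun x => ordS (pi x)) by move=> x y /ordS_inj /perm_inj.
have exc1 : exc (fun x => ordS (pi x)) = 1 by move: wex2; rewrite wex_exc // => -[].
split; first exact: exc1_support_gt1 exc1.
apply/permP => x; apply: ordS_inj.
by rewrite ordS_perm_of_set (exc1_eq_cpred rho_inj exc1).
Qed.

Lemma wex2_imset n :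
  [set pi : 'S_n | wex pi == 2] = @perm_of_set n @: [set S : {set 'I_n} | 1 < #|S|].
Proof.
apply/setP => pi; rewrite inE; apply/eqP/imsetP => [/wex2_perm_of_set [S_gt1 ->] | [S]].
  by exists [set x | ordS (pi x) != x]; rewrite ?inE.
by rewrite inE => S_gt1 ->; apply: wex_perm_of_set.
Qed.

Lemma alignedE n (pi : 'S_n) i j : aligned pi i j =
  [&& i != j, pi j != j, i != pi j, pi i != pi j, pi i != j,
      cres n i (pi i) < cres n i (pi j) & cres n i (pi j) < cres n i j].
Proof.
rewrite /aligned /=; case: (eqVneq i (pi i)) => [Ei | _] /=; last first.
  by case: (i != j); case: (pi j != j); case: (i != pi j); case: (pi i != pi j);
    case: (pi i != j); rewrite /= ?andbT.
rewrite -Ei cresxx lt0n cres_eq0 andbT.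
by case: (i != j); case: (pi j != j); case: (i != pi j); rewrite /= ?andbT.
Qed.

Lemma aligned_asym n (pi : 'S_n) i j : aligned pi i j -> ~~ aligned pi j i.
Proof.
rewrite !alignedE => /and5P [ij _ ipj _ /and3P [_ _ lt_ij]].
apply/negP => /and5P [_ _ _ _ /and3P [_ lt1 lt2]].
move: lt_ij; rewrite cres_arc // 1?eq_sym // => lt_ji.
by have := ltn_trans lt_ji (ltn_trans lt1 lt2); rewrite ltnn.
Qed.

Lemma al_aligned n (pi : 'S_n) :
  al pi = #|[set ij : 'I_n * 'I_n | aligned pi ij.1 ij.2]|.
Proof.
set A := [set ij | _].
pose sort (ij : 'I_n * 'I_n) := if ij.1 < ij.2 then ij else (ij.2, ij.1).
have sort_inj : {in A &, injective sort}.
  move=> [x1 x2] [y1 y2]; rewrite !inE /sort /= => ax ay.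
  case: ifP => _; case: ifP => _ [] E1 E2; rewrite ?E1 ?E2 //;
    by rewrite E1 E2 (negbTE (aligned_asym ay)) in ax.
rewrite /al -(card_in_imset sort_inj); apply: eq_card => -[x1 x2]; rewrite inE /=.
apply/idP/imsetP => [/andP [lt /orP [a | a]] | [[y1 y2]]].
- by exists (x1, x2); rewrite ?inE // /sort /= lt.
- by exists (x2, x1); rewrite ?inE // /sort /= ltnNge ltnW.
rewrite inE /sort /= => ay; have := ay; rewrite alignedE => /andP [y12 _].
case: ifP => lt [-> ->]; rewrite ?lt ?ay ?orbT //= andbT.
by rewrite ltn_neqAle leqNgt lt andbT eq_sym.
Qed.

Lemma aligned_perm_of_set n (S : {set 'I_n}) i j : 1 < #|S| ->
  aligned (perm_of_set S) i j =
  [&& i \in S, j \notin S & cres n i (cpred S i) < cres n i j].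
Proof.
move=> S_gt1; case: (eqVneq j i) => [-> | ji].
  by rewrite alignedE eqxx /=; case: (i \in S).
rewrite alignedE -!(eq_cres i) !perm_of_setE !cres_ord_pred cresxx.
have d_pos : 0 < cres n i j by rewrite lt0n cres_eq0 eq_sym.
have := cres_lt i j; case iS: (i \in S); last first.
  rewrite (cpred_out (negbT iS)) eqxx /=; have := cres_lt i (cpred S j).
  by case: eqP => _; lia.
have c_pos : 0 < cres n i (cpred S i) by rewrite lt0n cres_eq0 eq_sym cpred_neq.
rewrite (negbTE (cpred_neq S_gt1 iS)) /=.
case jS: (j \in S) => /=; last by rewrite (cpred_out (negbT jS)) (negbTE ji); lia.
by have := (cpredP iS).2 j jS; have := cres_lt i (cpred S j); case: eqP => _; lia.
Qed.

(* j lies on the clockwise arc from cpred S x to x iff x is the first point of S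
   after j. *)
Lemma cpred_before n (S : {set 'I_n}) x j : x \in S -> j \notin S ->
  (cres n x (cpred S x) < cres n x j) = [forall y in S, cres n j x <= cres n j y].
Proof.
move=> xS jS; have jx : j != x by apply: contraNneq jS => ->.
have [cS c_max] := cpredP xS.
apply/idP/forall_inP => [lt_j y yS | x_first].
  case: (eqVneq y x) => [-> // | yx].
  by rewrite ltnW // -cres_arc // (leq_ltn_trans (c_max y yS)).
case: (eqVneq (cpred S x) x) => [-> | cx]; first by rewrite cresxx lt0n cres_eq0 eq_sym.
by rewrite cres_arc // ltn_neqAle x_first // andbT eq_cres eq_sym.
Qed.

Lemma al_perm_of_set n (S : {set 'I_n}) : 1 < #|S| -> al (perm_of_set S) = n - #|S|.
Proof.
move=> S_gt1; rewrite al_aligned; set A := [set ij | _].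
have alignedP i j : aligned (perm_of_set S) i j =
    [&& i \in S, j \notin S & [forall y in S, cres n j i <= cres n j y]].
  rewrite aligned_perm_of_set //.
  by case iS: (i \in S); case jS: (j \in S) => //=; apply: cpred_before; rewrite ?jS.
have snd_inj : {in A &, injective snd}.
  move=> [i1 j] [i2 j2]; rewrite !inE !alignedP /= => /and3P [i1S _ /forall_inP m1].
  move=> /and3P [i2S _ /forall_inP m2] /= j2j; rewrite -j2j in m2 *.
  by congr (_, _); apply: (@cres_inj _ j); apply/eqP; rewrite eqn_leq m1 // m2.
rewrite -(card_in_imset snd_inj) (_ : snd @: A = ~: S); last first.
  apply/setP => j; rewrite inE; apply/imsetP/idP => [[[i j']] | jS].
    by rewrite inE alignedP => /and3P [_ jS _] ->.
  have [s0 s0S] : exists s0, s0 \in S by apply/card_gt0P; lia.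
  have [i iS i_min] := arg_minnP (fun y : 'I_n => cres n j y) s0S.
  exists (i, j) => //; rewrite inE alignedP jS (iS : i \in S).
  by apply/forall_inP => y; apply: i_min.
by rewrite [#|~: S|]cardsCs setCK card_ord.
Qed.

Import GRing.Theory.
Local Open Scope ring_scope.

Lemma sum_sets_card_gt1 (R : pzSemiRingType) n (q : R) : (1 < n)%N ->
  \sum_(S : {set 'I_n} | (1 < #|S|)%N) q ^+ (#|S| - 2) =
  \sum_(i < n.-1) ('C(n, i.+2))%:R * q ^+ i.
Proof.
move=> n_gt1; have size_lt (S : {set 'I_n}) : (#|S| - 2 < n.-1)%N.
  by have := max_card S; rewrite card_ord; lia.
rewrite (partition_big (fun S => Ordinal (size_lt S)) xpredT) //=.
apply: eq_bigr => i _; have := card_draws 'I_n i.+2; rewrite card_ord => <-.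
rewrite mulr_natl -sumr_const; apply: eq_big => [S | S /andP [_ /eqP <-] //].
rewrite inE -val_eqE /=; have := max_card S; rewrite card_ord.
by have := ltn_ord i; lia.
Qed.

Theorem mainTheorem11 (R : fieldType) (n : nat) (q : R) :
  (2 <= n)%N -> q != 0 ->
  hatEkn 2 n q = \sum_(i < n.-1) ('C(n, i.+2))%:R * q ^+ i.
Proof.
move=> n_ge2 q_neq0; rewrite -sum_sets_card_gt1 // /hatEkn /Ekn mulr_sumr.
pose sets_gt1 := [set S : {set 'I_n} | 1 < #|S|]%N.
rewrite (eq_bigl (fun pi => pi \in @perm_of_set n @: sets_gt1)) => [|pi]; last first.
  by rewrite -wex2_imset inE.
rewrite big_imset /=; last exact: perm_of_set_inj.
apply: eq_big => S; rewrite inE // => S_gt1.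
have S_le_n : (#|S| <= n)%N by rewrite -[X in (_ <= X)%N]card_ord max_card.
rewrite al_perm_of_set // -expfzDr // (_ : _ + _ = (#|S| - 2)%N :> int) //.
by move: S_gt1 S_le_n; set k := #|S|; lia.
Qed.
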